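(* Let $M,N\in\Lambda_\bot^{001}$ be such that neither $M$ nor $N$ contains a subterm of the form $\lambda x.\bot$ or $(\bot)P$. If $\mathcal T(M)=\mathcal T(N)$ then $M=N$.
   Context: $\Lambda_\bot^{001}$: possibly infinite trees built from variables, a constant $\bot$, abstractions $\lambda x.M$ and applications $(M)N$, whose infinite branches all enter infinitely often the argument position $N$ of an application, up to α-equivalence. Resource terms: $s::=x\mid\lambda x.s\mid\langle s\rangle\bar t$, with $\bar t=[t_1,\dots,t_n]$ a finite multiset of resource terms. Taylor approximation $\ltimes$ is defined inductively: $x\ltimes x$; $s\ltimes M\Rightarrow\lambda x.s\ltimes\lambda x.M$; ($s\ltimes M$ and $t_i\ltimes N$ for all $1\le i\le n$) $\Rightarrow\langle s\rangle[t_1,\dots,t_n]\ltimes(M)N$; no resource term approximates $\bot$. $\mathcal T(M)=\{s : s\ltimes M\}$. *)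

From Stdlib Require Import List Arith.
Import ListNotations.

(* Possibly infinite lambda-terms with a constant bot; variables are de Bruijn
   indices, so alpha-equivalence is built in. *)
CoInductive term : Type :=
| Var : nat -> term
| Bot : term
| Lam : term -> term
| App : term -> term -> term.

(* Equality of (possibly infinite) trees: bisimilarity. *)
CoInductive bisim : term -> term -> Prop :=
| bisim_var n : bisim (Var n) (Var n)
| bisim_bot : bisim Bot Bot
| bisim_lam M N : bisim M N -> bisim (Lam M) (Lam N)
| bisim_app M M' N N' : bisim M N -> bisim M' N' -> bisim (App M M') (App N N').

Inductive dir : Type := Body | Fun | Arg.

Definition step (t : term) (d : dir) : option term :=
  match t, d with
  | Lam s, Body => Some s
  | App s _, Fun => Some s
  | App _ u, Arg => Some u
  | _, _ => None
  end.

Fixpoint follow (t : term) (b : nat -> dir) (n : nat) : option term :=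
  match n with
  | 0 => Some t
  | S n => match follow t b n with
           | Some s => step s (b n)
           | None => None
           end
  end.

Definition infinite_branch (t : term) (b : nat -> dir) : Prop :=
  forall n, follow t b n <> None.

Definition is001 (t : term) : Prop :=
  forall b, infinite_branch t b -> forall n, exists m, n <= m /\ b m = Arg.

Inductive subterm : term -> term -> Prop :=
| sub_refl t : subterm t t
| sub_lam s t : subterm s t -> subterm s (Lam t)
| sub_appl s t u : subterm s t -> subterm s (App t u)
| sub_appr s t u : subterm s u -> subterm s (App t u).

Definition forbidden (t : term) : Prop :=
  match t with
  | Lam Bot => True
  | App Bot _ => True
  | _ => False
  end.

(* Resource terms; the finite multiset [t1,...,tn] is represented by a list
   (the approximation relation is invariant under permutation of the list). *)
Inductive rterm : Type :=
| RVar : nat -> rterm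
| RLam : rterm -> rterm
| RApp : rterm -> list rterm -> rterm.

Inductive approx : rterm -> term -> Prop :=
| approx_var x : approx (RVar x) (Var x)
| approx_lam s M : approx s M -> approx (RLam s) (Lam M)
| approx_app s ts M N :
    approx s M -> Forall (fun t => approx t N) ts -> approx (RApp s ts) (App M N).

Definition taylor (M : term) : rterm -> Prop := fun s => approx s M.

(* The Taylor expansion of a term determines its root: a variable [x] is
   witnessed by the approximant [x], and an abstraction or application by any
   approximant at all, which exists as soon as the term is not [Bot].  For this
   follow the head spine (bodies of abstractions, functions of applications):
   since it never enters an argument position, the 001 condition forces it to
   end at a variable or at [Bot], and the forbidden shapes say that [Bot] can
   only be reached at depth 0.  Taylor equality is then inherited by the
   immediate subterms — for arguments this again uses a nonempty expansion of
   the function — so the two trees are bisimilar by coinduction. *)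

From Stdlib Require Import List Arith Lia Classical.
Import ListNotations.

Definition no_forbidden (t : term) : Prop := forall s, subterm s t -> ~ forbidden s.

Definition regular (t : term) : Prop := is001 t /\ no_forbidden t.

Definition taylor_eq (M N : term) : Prop := forall s, taylor M s <-> taylor N s.

Lemma follow_step t d s b n :
  step t d = Some s ->
  follow t (fun k => match k with 0 => d | S k => b k end) (S n) = follow s b n.
Proof.
  intros Hts; induction n as [|n IHn]; simpl in *.
  - now rewrite Hts.
  - now rewrite IHn.
Qed.

Lemma is001_step t d s : is001 t -> step t d = Some s -> is001 s.
Proof.
  intros Ht Hts b Hb n.
  set (b' := fun k => match k with 0 => d | S k => b k end).
  assert (Hb' : infinite_branch t b').
  { intros [|k]; [discriminate|]. unfold b'. rewrite (follow_step _ _ _ _ _ Hts). apply Hb. }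
  destruct (Ht b' Hb' (S n)) as [[|m] [Hnm Hm]]; [lia|].
  exists m; split; [lia | exact Hm].
Qed.

Lemma subterm_step t d s : step t d = Some s -> forall u, subterm u s -> subterm u t.
Proof.
  destruct t, d; simpl; intros Hts u Hu; try discriminate; injection Hts as <-.
  - now apply sub_lam.
  - now apply sub_appl.
  - now apply sub_appr.
Qed.

Lemma regular_step t d s : regular t -> step t d = Some s -> regular s.
Proof.
  intros [H001 Hnf] Hts; split.
  - exact (is001_step _ _ _ H001 Hts).
  - intros u Hu; exact (Hnf u (subterm_step _ _ _ Hts u Hu)).
Qed.

Lemma no_forbidden_Lam M : no_forbidden (Lam M) -> M <> Bot /\ no_forbidden M.
Proof.
  intros Hnf; split.
  - intros ->; exact (Hnf _ (sub_refl _) I).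
  - intros u Hu; exact (Hnf u (sub_lam _ _ Hu)).
Qed.

Lemma no_forbidden_App_fun P Q : no_forbidden (App P Q) -> P <> Bot /\ no_forbidden P.
Proof.
  intros Hnf; split.
  - intros ->; exact (Hnf _ (sub_refl _) I).
  - intros u Hu; exact (Hnf u (sub_appl _ _ _ Hu)).
Qed.

Definition head_child (t : term) : term :=
  match t with Lam s => s | App s _ => s | _ => t end.

Definition head_dir (t : term) : dir :=
  match t with App _ _ => Fun | _ => Body end.

Definition head_spine (t : term) (n : nat) : term := Nat.iter n head_child t.

Definition is_leaf (t : term) : Prop :=
  match t with Var _ | Bot => True | _ => False end.

Lemma head_spine_reaches_leaf M : is001 M -> exists n, is_leaf (head_spine M n).
Proof.
  intros H001; apply NNPP; intros Hnoleaf.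
  set (b := fun n => head_dir (head_spine M n)).
  assert (Hfollow : forall n, follow M b n = Some (head_spine M n)).
  { induction n as [|n IHn]; [reflexivity|].
    simpl; rewrite IHn; unfold b, head_spine; simpl.
    destruct (Nat.iter n head_child M) eqn:E;
      try (exfalso; apply Hnoleaf; exists n; unfold head_spine; rewrite E; exact I);
      reflexivity. }
  assert (Hb : infinite_branch M b) by (intro n; rewrite Hfollow; discriminate).
  destruct (H001 b Hb 0) as [m [_ Hm]].
  unfold b in Hm; destruct (head_spine M m); discriminate.
Qed.

Lemma approx_of_leaf_spine n : forall M,
  no_forbidden M -> M <> Bot -> is_leaf (head_spine M n) -> exists s, approx s M.
Proof.
  induction n as [|n IHn]; intros M Hnf HM Hleaf.
  - destruct M; simpl in Hleaf; try contradiction; [eexists; constructor].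
  - unfold head_spine in Hleaf; rewrite Nat.iter_succ_r in Hleaf.
    destruct M as [x| |M'|P Q].
    + eexists; constructor.
    + congruence.
    + destruct (no_forbidden_Lam _ Hnf) as [HM' Hnf'].
      destruct (IHn M' Hnf' HM' Hleaf) as [s Hs].
      exists (RLam s); now constructor.
    + destruct (no_forbidden_App_fun _ _ Hnf) as [HP HnfP].
      destruct (IHn P HnfP HP Hleaf) as [s Hs].
      exists (RApp s []); now constructor.
Qed.

Lemma taylor_nonempty M : regular M -> M <> Bot -> exists s, approx s M.
Proof.
  intros [H001 Hnf] HM.
  destruct (head_spine_reaches_leaf M H001) as [n Hleaf].
  exact (approx_of_leaf_spine n M Hnf HM Hleaf).
Qed.

Lemma taylor_eq_sym M N : taylor_eq M N -> taylor_eq N M.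
Proof. intros H s; symmetry; apply H. Qed.

Lemma taylor_eq_Lam M N : taylor_eq (Lam M) (Lam N) -> taylor_eq M N.
Proof.
  intros H s; split; intros Hs.
  - assert (A : approx (RLam s) (Lam N)) by (apply H; now constructor).
    now inversion A.
  - assert (A : approx (RLam s) (Lam M)) by (apply H; now constructor).
    now inversion A.
Qed.

Lemma taylor_eq_App_fun P Q P' Q' : taylor_eq (App P Q) (App P' Q') -> taylor_eq P P'.
Proof.
  intros H s; split; intros Hs.
  - assert (A : approx (RApp s []) (App P' Q')) by (apply H; now constructor).
    now inversion A.
  - assert (A : approx (RApp s []) (App P Q)) by (apply H; now constructor).
    now inversion A.
Qed.

Lemma taylor_eq_App_arg_incl P Q P' Q' :
  (exists s, approx s P) -> taylor_eq (App P Q) (App P' Q') ->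
  forall t, approx t Q -> approx t Q'.
Proof.
  intros [s Hs] H t Ht.
  assert (A : approx (RApp s [t]) (App P' Q')) by (apply H; now repeat constructor).
  inversion A as [| |? ? ? ? _ Hts]; subst; now inversion Hts.
Qed.

Lemma taylor_eq_App_arg P Q P' Q' :
  (exists s, approx s P) -> taylor_eq (App P Q) (App P' Q') -> taylor_eq Q Q'.
Proof.
  intros [s Hs] H t; split.
  - now apply (taylor_eq_App_arg_incl P Q P' Q'); [exists s|].
  - apply (taylor_eq_App_arg_incl P' Q' P Q); [|exact (taylor_eq_sym _ _ H)].
    exists s; exact (proj1 (taylor_eq_App_fun _ _ _ _ H s) Hs).
Qed.

Lemma taylor_eq_Bot N : regular N -> taylor_eq Bot N -> N = Bot.
Proof.
  intros HN H; apply NNPP; intros HNBot.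
  destruct (taylor_nonempty N HN HNBot) as [s Hs].
  apply H in Hs; inversion Hs.
Qed.

Lemma taylor_eq_root M N : regular M -> regular N -> taylor_eq M N ->
  (M = Bot /\ N = Bot)
  \/ (exists x, M = Var x /\ N = Var x)
  \/ (exists M' N', M = Lam M' /\ N = Lam N' /\ taylor_eq M' N')
  \/ (exists P Q P' Q', M = App P Q /\ N = App P' Q' /\ taylor_eq P P' /\ taylor_eq Q Q').
Proof.
  intros HM HN H; destruct M as [x| |M'|P Q].
  - assert (A : approx (RVar x) N) by (apply H; constructor).
    inversion A; subst; eauto.
  - left; split; [reflexivity | exact (taylor_eq_Bot N HN H)].
  - destruct (no_forbidden_Lam _ (proj2 HM)) as [HM' _].
    destruct (taylor_nonempty M' (regular_step _ Body _ HM eq_refl) HM') as [s Hs].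
    assert (A : approx (RLam s) N) by (apply H; now constructor).
    inversion A as [|? N' _|]; subst; right; right; left.
    exists M', N'; split; [reflexivity | split; [reflexivity | exact (taylor_eq_Lam _ _ H)]].
  - destruct (no_forbidden_App_fun _ _ (proj2 HM)) as [HP _].
    destruct (taylor_nonempty P (regular_step _ Fun _ HM eq_refl) HP) as [s Hs].
    assert (A : approx (RApp s []) N) by (apply H; now constructor).
    inversion A as [| |? ? P' Q' _ _]; subst; right; right; right.
    exists P, Q, P', Q'; split; [reflexivity | split; [reflexivity | split]].
    + exact (taylor_eq_App_fun _ _ _ _ H).
    + exact (taylor_eq_App_arg _ _ _ _ (ex_intro _ s Hs) H).
Qed.

CoFixpoint bisim_of_taylor_eq M N :
  regular M -> regular N -> taylor_eq M N -> bisim M N.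
Proof.
  intros HM HN H.
  destruct (taylor_eq_root M N HM HN H)
    as [[-> ->] | [[x [-> ->]] | [[M' [N' [-> [-> H']]]] | [P [Q [P' [Q' [-> [-> [HP HQ]]]]]]]]]].
  - constructor.
  - constructor.
  - constructor; apply bisim_of_taylor_eq.
    + exact (regular_step _ Body _ HM eq_refl).
    + exact (regular_step _ Body _ HN eq_refl).
    + exact H'.
  - constructor; apply bisim_of_taylor_eq.
    + exact (regular_step _ Fun _ HM eq_refl).
    + exact (regular_step _ Fun _ HN eq_refl).
    + exact HP.
    + exact (regular_step _ Arg _ HM eq_refl).
    + exact (regular_step _ Arg _ HN eq_refl).
    + exact HQ.
Qed.

Theorem mainTheorem14 (M N : term) :
  is001 M -> is001 N ->
  (forall s, subterm s M -> ~ forbidden s) ->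
  (forall s, subterm s N -> ~ forbidden s) ->
  (forall s, taylor M s <-> taylor N s) ->
  bisim M N.
Proof.
  intros H001M H001N HnfM HnfN H.
  exact (bisim_of_taylor_eq M N (conj H001M HnfM) (conj H001N HnfN) H).
Qed.
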